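(* Let $\mathsf{L}\in\{\mathbf{PD},\mathsf{InqL},\mathbf{PT}\}$. For every formula $\phi$ in the language of $\mathsf{L}$, every flat substitution $\sigma$ of $\mathsf{L}$ and every team $X$: $X\models\sigma(\phi)$ if and only if $X_\sigma\models\phi$.
   Context: Fix a countably infinite set Prop of propositional variables. A valuation is a function $v:\mathrm{Prop}\to\{0,1\}$; a team is a set of valuations. Formulas of $\mathbf{PT}$: $\phi::=p\mid\bot\mid\top\mid\,=\!(\phi_1,\dots,\phi_n,\phi)\mid\neg\phi\mid\phi\wedge\phi\mid\phi\otimes\phi\mid\phi\vee\phi\mid\phi\to\phi$. Satisfaction on a team $X$: $X\models p$ iff $v(p)=1$ for all $v\in X$; $X\models\bot$ iff $X=\emptyset$; $X\models\top$ always; $\wedge$ is conjunction of conditions; $X\models\phi\otimes\psi$ iff $X=Y\cup Z$ with $Y\models\phi$, $Z\models\psi$; $X\models\phi\vee\psi$ iff $X\models\phi$ or $X\models\psi$; $X\models\phi\to\psi$ iff every $Y\subseteq X$ with $Y\models\phi$ satisfies $\psi$; $X\models\neg\phi$ iff $\{v\}\not\models\phi$ for all $v\in X$; $X\models\,=\!(\phi_1,\dots,\phi_n,\psi)$ iff $X\models\bigwedge_i(\phi_i\vee(\phi_i\to\bot))\to(\psi\vee(\psi\to\bot))$. $\phi$ is flat if for all teams $X$: $X\models\phi$ iff $\{v\}\models\phi$ for all $v\in X$. Formulas of $\mathbf{PD}$: $\phi::=p\mid\bot\mid\top\mid\,=\!(\vec\alpha,\beta)\mid\neg\phi\mid\phi\wedge\phi\mid\phi\otimes\phi$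 with $\vec\alpha,\beta$ flat, evaluated by the same clauses, where for $\mathbf{PD}$ the dependence clause is: $X\models\,=\!(\vec\alpha,\beta)$ iff for all $v,v'\in X$, if $\{v\}\models\alpha_i\Leftrightarrow\{v'\}\models\alpha_i$ for all $i$, then $\{v\}\models\beta\Leftrightarrow\{v'\}\models\beta$. $\mathsf{InqL}$: formulas built from $p,\bot,\top$ by $\wedge,\vee,\to$ with the same clauses. A substitution of $\mathsf L$ is a map on $\mathsf L$-formulas commuting with all connectives and atoms; it is flat if each $\sigma(p)$ is flat. For a valuation $v$ and substitution $\sigma$, $v_\sigma$ is the valuation with $v_\sigma(p)=1$ if $\{v\}\models\sigma(p)$ and $v_\sigma(p)=0$ otherwise; for a team $X$, $X_\sigma=\{v_\sigma\mid v\in X\}$. *)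

From Stdlib Require Import List.
Import ListNotations.

(* Prop = nat (countably infinite set of propositional variables). *)
Definition valuation := nat -> bool.
Definition team := valuation -> Prop.

Definition subteam (Y X : team) : Prop := forall v, Y v -> X v.
Definition empty_team (X : team) : Prop := forall v, ~ X v.
Definition is_union (X Y Z : team) : Prop := forall v, X v <-> (Y v \/ Z v).
Definition singleton (v : valuation) : team := fun w => w = v.

(* X_sigma = { v_sigma | v in X }, where v_sigma(p) = 1 iff {v} |= sigma(p).
   Parametrised by a satisfaction relation [sat] and the images [s p]. *)
Definition team_sub {F : Type} (sat : F -> team -> Prop) (s : nat -> F) (X : team) : team :=
  fun w => exists v, X v /\ (forall p, w p = true <-> sat (s p) (singleton v)).

Inductive PTform : Type :=
| PTvar : nat -> PTform
| PTbot : PTform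
| PTtop : PTform
| PTdep : list PTform -> PTform -> PTform
| PTneg : PTform -> PTform
| PTand : PTform -> PTform -> PTform
| PTtensor : PTform -> PTform -> PTform
| PTor : PTform -> PTform -> PTform
| PTimp : PTform -> PTform -> PTform.

(* X |= phi \/ (phi -> bot) *)
Definition decides (S : team -> Prop) (Y : team) : Prop :=
  S Y \/ (forall Z, subteam Z Y -> S Z -> empty_team Z).

Fixpoint PTsat (phi : PTform) (X : team) {struct phi} : Prop :=
  match phi with
  | PTvar p => forall v, X v -> v p = true
  | PTbot => empty_team X
  | PTtop => True
  | PTdep l psi =>
      (* X |= /\_i (phi_i \/ (phi_i -> bot)) -> (psi \/ (psi -> bot)) *)
      forall Y, subteam Y X ->
        (let fix all_dec (l : list PTform) : Prop :=
             match l with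
             | [] => True
             | a :: l' => decides (PTsat a) Y /\ all_dec l'
             end in all_dec l) ->
        decides (PTsat psi) Y
  | PTneg a => forall v, X v -> ~ PTsat a (singleton v)
  | PTand a b => PTsat a X /\ PTsat b X
  | PTtensor a b => exists Y Z, is_union X Y Z /\ PTsat a Y /\ PTsat b Z
  | PTor a b => PTsat a X \/ PTsat b X
  | PTimp a b => forall Y, subteam Y X -> PTsat a Y -> PTsat b Y
  end.

Definition PTflat (phi : PTform) : Prop :=
  forall X, PTsat phi X <-> (forall v, X v -> PTsat phi (singleton v)).

Fixpoint PTsubst (s : nat -> PTform) (phi : PTform) {struct phi} : PTform :=
  match phi with
  | PTvar p => s p
  | PTbot => PTbot
  | PTtop => PTtop
  | PTdep l psi => PTdep (map (PTsubst s) l) (PTsubst s psi)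
  | PTneg a => PTneg (PTsubst s a)
  | PTand a b => PTand (PTsubst s a) (PTsubst s b)
  | PTtensor a b => PTtensor (PTsubst s a) (PTsubst s b)
  | PTor a b => PTor (PTsubst s a) (PTsubst s b)
  | PTimp a b => PTimp (PTsubst s a) (PTsubst s b)
  end.

Fixpoint InqL_form (phi : PTform) : Prop :=
  match phi with
  | PTvar _ | PTbot | PTtop => True
  | PTand a b | PTor a b | PTimp a b => InqL_form a /\ InqL_form b
  | _ => False
  end.

Inductive PDform : Type :=
| PDvar : nat -> PDform
| PDbot : PDform
| PDtop : PDform
| PDdep : list PDform -> PDform -> PDform
| PDneg : PDform -> PDform
| PDand : PDform -> PDform -> PDform
| PDtensor : PDform -> PDform -> PDform.

Fixpoint PDsat (phi : PDform) (X : team) {struct phi} : Prop :=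
  match phi with
  | PDvar p => forall v, X v -> v p = true
  | PDbot => empty_team X
  | PDtop => True
  | PDdep l b =>
      forall v v', X v -> X v' ->
        (let fix agree (l : list PDform) : Prop :=
             match l with
             | [] => True
             | a :: l' => (PDsat a (singleton v) <-> PDsat a (singleton v')) /\ agree l'
             end in agree l) ->
        (PDsat b (singleton v) <-> PDsat b (singleton v'))
  | PDneg a => forall v, X v -> ~ PDsat a (singleton v)
  | PDand a b => PDsat a X /\ PDsat b X
  | PDtensor a b => exists Y Z, is_union X Y Z /\ PDsat a Y /\ PDsat b Z
  end.

Definition PDflat (phi : PDform) : Prop :=
  forall X, PDsat phi X <-> (forall v, X v -> PDsat phi (singleton v)).

Fixpoint PD_wf (phi : PDform) : Prop :=
  match phi with
  | PDvar _ | PDbot | PDtop => True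
  | PDdep l b =>
      (let fix all_wf (l : list PDform) : Prop :=
           match l with
           | [] => True
           | a :: l' => (PD_wf a /\ PDflat a) /\ all_wf l'
           end in all_wf l) /\ (PD_wf b /\ PDflat b)
  | PDneg a => PD_wf a
  | PDand a b | PDtensor a b => PD_wf a /\ PD_wf b
  end.

Fixpoint PDsubst (s : nat -> PDform) (phi : PDform) {struct phi} : PDform :=
  match phi with
  | PDvar p => s p
  | PDbot => PDbot
  | PDtop => PDtop
  | PDdep l b => PDdep (map (PDsubst s) l) (PDsubst s b)
  | PDneg a => PDneg (PDsubst s a)
  | PDand a b => PDand (PDsubst s a) (PDsubst s b)
  | PDtensor a b => PDtensor (PDsubst s a) (PDsubst s b)
  end.

(* The map v |-> v_sigma is a function f with X_sigma = f[X].  Every clause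
   of team semantics commutes with taking images under an arbitrary f: the
   subteams of f[X] are exactly the images of subteams of X (take preimages
   inside X), splittings of f[X] lift to splittings of X in the same way, and
   emptiness and singletons are preserved.  Induction on phi then gives
   X |= sigma(phi) iff f[X] |= phi; flatness is needed only at the atoms,
   where X |= sigma(p) reduces to {v} |= sigma(p), i.e. v_sigma(p) = 1, for
   all v in X. *)
From Stdlib Require Import List Setoid ClassicalEpsilon
  FunctionalExtensionality PropExtensionality.
Import ListNotations.

Lemma team_ext (X Y : team) : (forall v, X v <-> Y v) -> X = Y.
Proof.
  intro H. apply functional_extensionality; intro v.
  apply propositional_extensionality, H.
Qed.

Section Image.
Variable f : valuation -> valuation.

Definition img (X : team) : team := fun w => exists v, X v /\ w = f v.

Definition preimg_in (X Z : team) : team := fun v => X v /\ Z (f v).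

Lemma img_preimg_in X Z : subteam Z (img X) -> img (preimg_in X Z) = Z.
Proof.
  intro HZ; apply team_ext; intro w; split.
  - intros [v [[_ Hv] ->]]; exact Hv.
  - intro Hw. destruct (HZ w Hw) as [v [Hv ->]]. exists v; repeat split; auto.
Qed.

Lemma preimg_in_sub X Z : subteam (preimg_in X Z) X.
Proof. intros v [Hv _]; exact Hv. Qed.

Lemma img_sub Y X : subteam Y X -> subteam (img Y) (img X).
Proof. intros H w [v [Hv ->]]. exists v; auto. Qed.

Lemma img_singleton v : img (singleton v) = singleton (f v).
Proof.
  apply team_ext; intro w; split.
  - intros [u [-> ->]]; reflexivity.
  - intros ->. exists v; split; reflexivity.
Qed.

Lemma forall_img X (P : valuation -> Prop) :
  (forall w, img X w -> P w) <-> (forall v, X v -> P (f v)).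
Proof.
  split.
  - intros H v Hv. apply H. exists v; auto.
  - intros H w [v [Hv ->]]. apply H, Hv.
Qed.

Lemma empty_img X : empty_team (img X) <-> empty_team X.
Proof. apply (forall_img X (fun _ => False)). Qed.

Lemma forall_subteam_img X (P : team -> Prop) :
  (forall Z, subteam Z (img X) -> P Z) <-> (forall Y, subteam Y X -> P (img Y)).
Proof.
  split.
  - intros H Y HY. apply H, img_sub, HY.
  - intros H Z HZ. rewrite <- (img_preimg_in X Z HZ). apply H, preimg_in_sub.
Qed.

Lemma exists_union_img X (P Q : team -> Prop) :
  (exists Y Z, is_union (img X) Y Z /\ P Y /\ Q Z) <->
  (exists Y Z, is_union X Y Z /\ P (img Y) /\ Q (img Z)).
Proof.
  split.
  - intros [Y [Z [HU [HP HQ]]]].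
    assert (HY : subteam Y (img X)) by (intros w Hw; apply HU; auto).
    assert (HZ : subteam Z (img X)) by (intros w Hw; apply HU; auto).
    exists (preimg_in X Y), (preimg_in X Z).
    rewrite !img_preimg_in by assumption. split; [intro v; split | auto].
    + intro Hv. assert (Hfv : img X (f v)) by (exists v; auto).
      destruct (proj1 (HU _) Hfv); [left | right]; split; auto.
    + intros [[Hv _] | [Hv _]]; exact Hv.
  - intros [Y [Z [HU [HP HQ]]]]. exists (img Y), (img Z).
    split; [intro w; split | auto].
    + intros [v [Hv ->]].
      destruct (proj1 (HU v) Hv); [left | right]; exists v; auto.
    + intros [[v [Hv ->]] | [v [Hv ->]]]; exists v; split; auto; apply HU; auto.
Qed.

Lemma decides_img (A B : team -> Prop) :
  (forall X, A X <-> B (img X)) -> forall Y, decides A Y <-> decides B (img Y).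
Proof.
  intros HAB Y. unfold decides.
  rewrite (forall_subteam_img Y (fun Z => B Z -> empty_team Z)).
  setoid_rewrite <- HAB. setoid_rewrite empty_img. reflexivity.
Qed.

End Image.

Definition val_sub {F : Type} (sat : F -> team -> Prop) (s : nat -> F)
  (v : valuation) : valuation :=
  fun p => if excluded_middle_informative (sat (s p) (singleton v)) then true else false.

Lemma val_sub_spec {F} (sat : F -> team -> Prop) s v p :
  val_sub sat s v p = true <-> sat (s p) (singleton v).
Proof.
  unfold val_sub. destruct (excluded_middle_informative _); split; auto; discriminate.
Qed.

Lemma team_sub_img {F} (sat : F -> team -> Prop) s X :
  team_sub sat s X = img (val_sub sat s) X.
Proof.
  apply team_ext; intro w; split.
  - intros [v [Hv Hw]]. exists v; split; auto.
    apply functional_extensionality; intro p.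
    specialize (Hw p). pose proof (val_sub_spec sat s v p) as Hs.
    destruct (w p), (val_sub sat s v p); try reflexivity.
    + symmetry; apply Hs, Hw; reflexivity.
    + apply Hw, Hs; reflexivity.
  - intros [v [Hv ->]]. exists v; split; auto. intro p; apply val_sub_spec.
Qed.

Section PTform_nested_ind.
Variable P : PTform -> Prop.
Hypothesis Hvar : forall p, P (PTvar p).
Hypothesis Hbot : P PTbot.
Hypothesis Htop : P PTtop.
Hypothesis Hdep : forall l psi, Forall P l -> P psi -> P (PTdep l psi).
Hypothesis Hneg : forall a, P a -> P (PTneg a).
Hypothesis Hand : forall a b, P a -> P b -> P (PTand a b).
Hypothesis Htensor : forall a b, P a -> P b -> P (PTtensor a b).
Hypothesis Hor : forall a b, P a -> P b -> P (PTor a b).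
Hypothesis Himp : forall a b, P a -> P b -> P (PTimp a b).

Fixpoint PTform_nested_ind (phi : PTform) : P phi :=
  match phi with
  | PTvar p => Hvar p
  | PTbot => Hbot
  | PTtop => Htop
  | PTdep l psi => Hdep l psi
      ((fix all (l : list PTform) : Forall P l :=
          match l with
          | [] => Forall_nil _
          | a :: l' => Forall_cons _ (PTform_nested_ind a) (all l')
          end) l) (PTform_nested_ind psi)
  | PTneg a => Hneg a (PTform_nested_ind a)
  | PTand a b => Hand a b (PTform_nested_ind a) (PTform_nested_ind b)
  | PTtensor a b => Htensor a b (PTform_nested_ind a) (PTform_nested_ind b)
  | PTor a b => Hor a b (PTform_nested_ind a) (PTform_nested_ind b)
  | PTimp a b => Himp a b (PTform_nested_ind a) (PTform_nested_ind b)
  end.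
End PTform_nested_ind.

Section PDform_nested_ind.
Variable P : PDform -> Prop.
Hypothesis Hvar : forall p, P (PDvar p).
Hypothesis Hbot : P PDbot.
Hypothesis Htop : P PDtop.
Hypothesis Hdep : forall l psi, Forall P l -> P psi -> P (PDdep l psi).
Hypothesis Hneg : forall a, P a -> P (PDneg a).
Hypothesis Hand : forall a b, P a -> P b -> P (PDand a b).
Hypothesis Htensor : forall a b, P a -> P b -> P (PDtensor a b).

Fixpoint PDform_nested_ind (phi : PDform) : P phi :=
  match phi with
  | PDvar p => Hvar p
  | PDbot => Hbot
  | PDtop => Htop
  | PDdep l psi => Hdep l psi
      ((fix all (l : list PDform) : Forall P l :=
          match l with
          | [] => Forall_nil _
          | a :: l' => Forall_cons _ (PDform_nested_ind a) (all l')
          end) l) (PDform_nested_ind psi)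
  | PDneg a => Hneg a (PDform_nested_ind a)
  | PDand a b => Hand a b (PDform_nested_ind a) (PDform_nested_ind b)
  | PDtensor a b => Htensor a b (PDform_nested_ind a) (PDform_nested_ind b)
  end.
End PDform_nested_ind.

Fixpoint all_decides (l : list PTform) (Y : team) : Prop :=
  match l with
  | [] => True
  | a :: l' => decides (PTsat a) Y /\ all_decides l' Y
  end.

Fixpoint all_agree (l : list PDform) (v v' : valuation) : Prop :=
  match l with
  | [] => True
  | a :: l' => (PDsat a (singleton v) <-> PDsat a (singleton v')) /\ all_agree l' v v'
  end.

Lemma PTsat_dep l psi X : PTsat (PTdep l psi) X <->
  (forall Y, subteam Y X -> all_decides l Y -> decides (PTsat psi) Y).
Proof.
  simpl. split; intros H Y HY Hl; apply H; auto; revert Hl; clear.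
  all: induction l; simpl; tauto.
Qed.

Lemma PDsat_dep l b X : PDsat (PDdep l b) X <->
  (forall v, X v -> forall v', X v' -> all_agree l v v' ->
     (PDsat b (singleton v) <-> PDsat b (singleton v'))).
Proof.
  simpl. split; intros H v Hv v' Hv' Hl; apply H; auto; revert Hl; clear.
  all: induction l; simpl; tauto.
Qed.

Section PT_substitution.
Variable s : nat -> PTform.
Variable f : valuation -> valuation.
Hypothesis f_spec : forall v p, f v p = true <-> PTsat (s p) (singleton v).
Hypothesis s_flat : forall p, PTflat (s p).

Lemma PTsat_subst_img phi X : PTsat (PTsubst s phi) X <-> PTsat phi (img f X).
Proof.
  revert X. induction phi as
    [p | | | l psi Hl IHpsi | a IHa | a b IHa IHb | a b IHa IHb | a b IHa IHb
    | a b IHa IHb] using PTform_nested_ind; intro X; simpl PTsubst.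
  - simpl. rewrite (s_flat p X), forall_img. setoid_rewrite f_spec. reflexivity.
  - symmetry; apply empty_img.
  - reflexivity.
  - assert (Hdec : forall Y,
               all_decides (map (PTsubst s) l) Y <-> all_decides l (img f Y)).
    { intro Y. induction Hl as [| a l Ha _ IHl]; simpl; [tauto |].
      rewrite (decides_img f _ _ Ha), IHl. reflexivity. }
    rewrite !PTsat_dep, forall_subteam_img.
    setoid_rewrite Hdec. setoid_rewrite (decides_img f _ _ IHpsi). reflexivity.
  - simpl. rewrite forall_img. setoid_rewrite IHa.
    setoid_rewrite img_singleton. reflexivity.
  - simpl. rewrite IHa, IHb. reflexivity.
  - simpl. rewrite exists_union_img. setoid_rewrite IHa.
    setoid_rewrite IHb. reflexivity.
  - simpl. rewrite IHa, IHb. reflexivity.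
  - simpl. rewrite forall_subteam_img. setoid_rewrite IHa.
    setoid_rewrite IHb. reflexivity.
Qed.
End PT_substitution.

Section PD_substitution.
Variable s : nat -> PDform.
Variable f : valuation -> valuation.
Hypothesis f_spec : forall v p, f v p = true <-> PDsat (s p) (singleton v).
Hypothesis s_flat : forall p, PDflat (s p).

Lemma PDsat_subst_img phi X : PDsat (PDsubst s phi) X <-> PDsat phi (img f X).
Proof.
  revert X. induction phi as
    [p | | | l b Hl IHb | a IHa | a b IHa IHb | a b IHa IHb]
    using PDform_nested_ind; intro X; simpl PDsubst.
  - simpl. rewrite (s_flat p X), forall_img. setoid_rewrite f_spec. reflexivity.
  - symmetry; apply empty_img.
  - reflexivity.
  - assert (Hpoint : forall a,
               (forall X, PDsat (PDsubst s a) X <-> PDsat a (img f X)) ->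
               forall v, PDsat (PDsubst s a) (singleton v) <-> PDsat a (singleton (f v))).
    { intros a Ha v. rewrite Ha, img_singleton. reflexivity. }
    assert (Hagree : forall v v',
               all_agree (map (PDsubst s) l) v v' <-> all_agree l (f v) (f v')).
    { intros v v'. induction Hl as [| a l Ha _ IHl]; simpl; [tauto |].
      rewrite !(Hpoint a Ha), IHl. reflexivity. }
    rewrite !PDsat_dep, forall_img. setoid_rewrite forall_img.
    setoid_rewrite Hagree. setoid_rewrite (Hpoint b IHb). reflexivity.
  - simpl. rewrite forall_img. setoid_rewrite IHa.
    setoid_rewrite img_singleton. reflexivity.
  - simpl. rewrite IHa, IHb. reflexivity.
  - simpl. rewrite exists_union_img. setoid_rewrite IHa.
    setoid_rewrite IHb. reflexivity.
Qed.
End PD_substitution.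

Theorem lemma3p5 :
  (* L = PD *)
  (forall (phi : PDform) (s : nat -> PDform) (X : team),
      PD_wf phi -> (forall p, PD_wf (s p) /\ PDflat (s p)) ->
      (PDsat (PDsubst s phi) X <-> PDsat phi (team_sub PDsat s X))) /\
  (* L = InqL *)
  (forall (phi : PTform) (s : nat -> PTform) (X : team),
      InqL_form phi -> (forall p, InqL_form (s p) /\ PTflat (s p)) ->
      (PTsat (PTsubst s phi) X <-> PTsat phi (team_sub PTsat s X))) /\
  (* L = PT *)
  (forall (phi : PTform) (s : nat -> PTform) (X : team),
      (forall p, PTflat (s p)) ->
      (PTsat (PTsubst s phi) X <-> PTsat phi (team_sub PTsat s X))).
Proof.
  split; [| split].
  - intros phi s X _ Hs. rewrite team_sub_img.
    apply PDsat_subst_img; [apply val_sub_spec | apply Hs].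
  - intros phi s X _ Hs. rewrite team_sub_img.
    apply PTsat_subst_img; [apply val_sub_spec | apply Hs].
  - intros phi s X Hs. rewrite team_sub_img.
    apply PTsat_subst_img; [apply val_sub_spec | apply Hs].
Qed.
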